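(* Let $\mathcal T=(\mathbf T^{(1)},\dots,\mathbf T^{(n)})$ be an MPS with contraction $\mathbf T\neq0$, and let $\delta$ be an $\epsilon$-perturbation of $\mathcal T$. Then as $\epsilon\to0$, $$\mathscr E_r(\mathcal T,\delta)\le\epsilon\sum_{j=1}^n\frac{\|T^{[1,j-1]}_\rightarrow\|_2\,\|\mathbf T^{(j)}\|_F\,\|T^{[j+1,n]}_\leftarrow\|_2}{\|\mathbf T\|_F}+O(\epsilon^2).$$ Moreover the bound is tight: it is attained up to $O(\epsilon^2)$ by some $\epsilon$-perturbation when $\mathcal T$ is a product state network.
   Context: MPS: an MPS with $n$ sites is a tensor network on a path: site $j$ carries a physical (uncontracted) leg $p_j$, and for $1\le j\le n-1$ a bond (contracted leg) $b_j$ of dimension $D_j$ joins sites $j$ and $j+1$; $\mathbf T^{(1)}$ has legs $(p_1,b_1)$, $\mathbf T^{(n)}$ has legs $(b_{n-1},p_n)$, and $\mathbf T^{(j)}$ for $1<j<n$ has legs $(b_{j-1},p_j,b_j)$. The contraction $\mathbf T$ sums over all bond indices the product of the site entries. For $a\le b$, $\mathbf T^{[a,b]}$ is the contraction of sites $a,\dots,b$ only. $T^{[1,j-1]}_\rightarrow$ is the matricization of $\mathbf T^{[1,j-1]}$ with rows indexed by $p_1,\dots,p_{j-1}$ and columns by $b_{j-1}$; $T^{[j+1,n]}_\leftarrow$ is the matricization of $\mathbf T^{[j+1,n]}$ with rows indexed by $p_{j+1},\dots,p_n$ and columns by $b_j$; by convention $\|T^{[1,0]}_\rightarrow\|_2=\|T^{[n+1,n]}_\leftarrow\|_2=1$.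 An $\epsilon$-perturbation is a tuple $\delta=(\delta^{(i)})_{i=1}^n$, $\delta^{(i)}$ of the shape of $\mathbf T^{(i)}$, with $\|\delta^{(i)}\|_F\le\epsilon\|\mathbf T^{(i)}\|_F$ for all $i$; $\hat{\mathbf T}$ is the contraction of the sites $\mathbf T^{(i)}+\delta^{(i)}$ and $\mathscr E_r(\mathcal T,\delta)=\|\hat{\mathbf T}-\mathbf T\|_F/\|\mathbf T\|_F$. Product state network: there are unit vectors $u_e$, one per leg $e$, with each $\mathbf T^{(j)}=\|\mathbf T^{(j)}\|_F\bigotimes_{e\text{ at }j}u_e$. $\|\cdot\|_F$ Frobenius, $\|\cdot\|_2$ spectral norm. *)

From Stdlib Require Import Bool Reals Lra Lia Arith List ClassicalEpsilon.
Open Scope R_scope.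

(** Site tensors of an n-site MPS are given as a single function
    [A : nat -> nat -> nat -> nat -> R]: for 1 <= j <= n,
    [A j a p b] is the entry of T^(j) at (b_{j-1} = a, p_j = p, b_j = b).
    Physical dimensions: [d j] for site j; bond dimensions [D j] for bond
    b_j, 1 <= j <= n-1.  The boundary legs b_0, b_n do not exist in the
    paper; we encode them uniformly as dummy legs of dimension 1 (index 0),
    so that T^(1) with legs (p_1,b_1) is [fun p b => A 1 0 p b], etc.
    Entries outside the index ranges are never used. *)

Definition site_tensors := nat -> nat -> nat -> nat -> R.

Definition bdim (n : nat) (D : nat -> nat) (j : nat) : nat :=
  if orb (j =? 0)%nat (n <=? j)%nat then 1%nat else D j.

Fixpoint rsum (m : nat) (f : nat -> R) : R :=
  match m with
  | O => 0
  | S m' => rsum m' f + f m'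
  end.

Fixpoint msum (ds : list nat) (f : list nat -> R) : R :=
  match ds with
  | nil => f nil
  | m :: ds' => rsum m (fun i => msum ds' (fun l => f (i :: l)))
  end.

Definition pdims (d : nat -> nat) (i k : nat) : list nat := map d (seq i k).

(** left partial contraction T^[1,j]: physical indices ps (positions
    0..j-1 hold p_1..p_j), bond index b of b_j *)
Fixpoint lenv (n : nat) (D : nat -> nat) (A : site_tensors)
    (j : nat) (ps : list nat) (b : nat) : R :=
  match j with
  | O => if (b =? 0)%nat then 1 else 0
  | S j' => rsum (bdim n D j')
              (fun a => lenv n D A j' ps a * A (S j') a (nth j' ps 0%nat) b)
  end.

(** right partial contraction T^[n-k+1,n]: physical indices ps
    (= p_{n-k+1},...,p_n), bond index b of b_{n-k} *)
Fixpoint renv (n : nat) (D : nat -> nat) (A : site_tensors)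
    (k : nat) (ps : list nat) (b : nat) : R :=
  match k with
  | O => if (b =? 0)%nat then 1 else 0
  | S k' => rsum (bdim n D (n - k'))
              (fun c => A (n - k')%nat b (hd 0%nat ps) c * renv n D A k' (tl ps) c)
  end.

Definition contr (n : nat) (D : nat -> nat) (A : site_tensors) (ps : list nat) : R :=
  lenv n D A n ps 0.

Definition fro_full (n : nat) (d D : nat -> nat) (A : site_tensors) : R :=
  sqrt (msum (pdims d 1 n) (fun ps => (contr n D A ps) ^ 2)).

Definition fro_site (n : nat) (d D : nat -> nat) (A : site_tensors) (j : nat) : R :=
  sqrt (rsum (bdim n D (j - 1)) (fun a =>
        rsum (d j) (fun p =>
        rsum (bdim n D j) (fun b => (A j a p b) ^ 2)))).

(** spectral norm of a matrix M with rows indexed by multi-indices over ds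
    and columns by 0..m-1:  sup_{||x||=1} ||M x||  (0 if m = 0) *)
Definition spec_norm (ds : list nat) (m : nat) (M : list nat -> nat -> R) : R :=
  epsilon (inhabits 0)
    (is_lub (fun y => y = 0 \/
       exists x : nat -> R, rsum m (fun c => (x c) ^ 2) = 1 /\
         y = sqrt (msum ds (fun r => (rsum m (fun c => M r c * x c)) ^ 2)))).

(** || T^[1,j-1]_-> ||_2  (rows p_1..p_{j-1}, columns b_{j-1}) *)
Definition lnorm (n : nat) (d D : nat -> nat) (A : site_tensors) (j : nat) : R :=
  spec_norm (pdims d 1 (j - 1)) (bdim n D (j - 1)) (lenv n D A (j - 1)).

(** || T^[j+1,n]_<- ||_2  (rows p_{j+1}..p_n, columns b_j) *)
Definition rnorm (n : nat) (d D : nat -> nat) (A : site_tensors) (j : nat) : R :=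
  spec_norm (pdims d (j + 1) (n - j)) (bdim n D j) (renv n D A (n - j)).

Definition first_order_coeff (n : nat) (d D : nat -> nat) (A : site_tensors) : R :=
  rsum n (fun i => let j := S i in
    lnorm n d D A j * fro_site n d D A j * rnorm n d D A j / fro_full n d D A).

Definition tadd (A B : site_tensors) : site_tensors :=
  fun j a p b => A j a p b + B j a p b.

Definition is_eps_perturbation (n : nat) (d D : nat -> nat)
    (A delta : site_tensors) (eps : R) : Prop :=
  forall j, (1 <= j <= n)%nat -> fro_site n d D delta j <= eps * fro_site n d D A j.

Definition rel_err (n : nat) (d D : nat -> nat) (A delta : site_tensors) : R :=
  sqrt (msum (pdims d 1 n) (fun ps =>
          (contr n D (tadd A delta) ps - contr n D A ps) ^ 2))
  / fro_full n d D A.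

(** product state network: unit vectors u j on leg p_j (1<=j<=n) and w j on
    bond b_j (1<=j<=n-1) with T^(j) = ||T^(j)||_F (w_{j-1} (x) u_j (x) w_j),
    the dummy boundary legs carrying the constant 1. *)
Definition bvec (n : nat) (w : nat -> nat -> R) (j : nat) : nat -> R :=
  if orb (j =? 0)%nat (n <=? j)%nat then (fun _ => 1) else w j.

Definition product_state (n : nat) (d D : nat -> nat) (A : site_tensors) : Prop :=
  exists (u w : nat -> nat -> R),
    (forall j, (1 <= j <= n)%nat -> rsum (d j) (fun p => (u j p) ^ 2) = 1) /\
    (forall j, (1 <= j < n)%nat -> rsum (D j) (fun b => (w j b) ^ 2) = 1) /\
    (forall j a p b, (1 <= j <= n)%nat -> (a < bdim n D (j - 1))%nat ->
       (p < d j)%nat -> (b < bdim n D j)%nat ->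
       A j a p b = fro_site n d D A j * bvec n w (j - 1) a * u j p * bvec n w j b).

From Stdlib Require Import Reals List Lra Lia Arith ClassicalEpsilon.
Open Scope R_scope.

(* Perturb the sites one at a time: T_hat - T telescopes into the sum over k of the
   contraction L_hat_k . delta^(k) . R_k, where L_hat_k contracts the perturbed sites before k
   and R_k the original sites after k.  Each summand has Frobenius norm at most
   ||L_hat_k||_2 ||delta^(k)||_F ||R_k||_2, and ||L_hat_k||_2 <= ||L_k||_2 + ||L_hat_k - L_k||_F,
   where the last term is O(eps) by induction on k; Minkowski's inequality adds the summands up.
   For a product state every environment has rank one and
   ||L_k||_2 ||T^(k)||_F ||R_k||_2 = ||T||_F, so the coefficient is at most n, while the
   perturbation delta = eps T has relative error (1 + eps)^n - 1 >= n eps. *)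

(** * Finite sums *)

Lemma rsum_ext m f g : (forall i, (i < m)%nat -> f i = g i) -> rsum m f = rsum m g.
Proof.
  induction m as [|m IH]; intros H; simpl; auto.
  rewrite IH by (intros; apply H; lia). rewrite H by lia. reflexivity.
Qed.

Lemma rsum_add m f g : rsum m (fun i => f i + g i) = rsum m f + rsum m g.
Proof. induction m; simpl; [lra | rewrite IHm; lra]. Qed.

Lemma rsum_sub m f g : rsum m (fun i => f i - g i) = rsum m f - rsum m g.
Proof. induction m; simpl; [lra | rewrite IHm; lra]. Qed.

Lemma rsum_scal m c f : rsum m (fun i => c * f i) = c * rsum m f.
Proof. induction m; simpl; [lra | rewrite IHm; lra]. Qed.

Lemma rsum_div m f c : rsum m (fun i => f i / c) = rsum m f / c.
Proof. unfold Rdiv. rewrite Rmult_comm, <- rsum_scal. apply rsum_ext; intros; ring. Qed.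

Lemma rsum_const m c : rsum m (fun _ => c) = INR m * c.
Proof. induction m; simpl rsum; [simpl; lra | rewrite IHm, S_INR; lra]. Qed.

Lemma rsum_zero m : rsum m (fun _ => 0) = 0.
Proof. rewrite rsum_const; ring. Qed.

Lemma rsum_le m f g : (forall i, (i < m)%nat -> f i <= g i) -> rsum m f <= rsum m g.
Proof.
  induction m as [|m IH]; intros H; simpl; [lra|].
  apply Rplus_le_compat; [apply IH; intros; apply H |apply H]; lia.
Qed.

Lemma rsum_nonneg m f : (forall i, (i < m)%nat -> 0 <= f i) -> 0 <= rsum m f.
Proof. intros H. rewrite <- (rsum_zero m). apply rsum_le; auto. Qed.

Lemma rsum_ge_term m f k :
  (k < m)%nat -> (forall i, (i < m)%nat -> 0 <= f i) -> f k <= rsum m f.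
Proof.
  induction m as [|m IH]; intros Hk H; [lia|]. simpl.
  destruct (Nat.eq_dec k m) as [->|Hkm].
  - assert (0 <= rsum m f) by (apply rsum_nonneg; intros; apply H; lia). lra.
  - assert (f k <= rsum m f) by (apply IH; [lia | intros; apply H; lia]).
    assert (0 <= f m) by (apply H; lia). lra.
Qed.

Lemma rsum_swap m1 m2 (f : nat -> nat -> R) :
  rsum m1 (fun i => rsum m2 (fun j => f i j)) = rsum m2 (fun j => rsum m1 (fun i => f i j)).
Proof.
  induction m1; simpl; [symmetry; apply rsum_zero|].
  rewrite IHm1, <- rsum_add. reflexivity.
Qed.

Lemma msum_ext ds f g : (forall l, Forall2 lt l ds -> f l = g l) -> msum ds f = msum ds g.
Proof.
  revert f g; induction ds; simpl; intros f g H; [apply H; constructor|].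
  apply rsum_ext; intros. apply IHds; intros; apply H; constructor; auto.
Qed.

Lemma msum_add ds f g : msum ds (fun l => f l + g l) = msum ds f + msum ds g.
Proof.
  revert f g; induction ds; simpl; intros; auto.
  rewrite <- rsum_add. apply rsum_ext; intros; apply IHds.
Qed.

Lemma msum_scal ds c f : msum ds (fun l => c * f l) = c * msum ds f.
Proof.
  revert f; induction ds; simpl; intros; auto.
  rewrite <- rsum_scal. apply rsum_ext; intros; apply IHds.
Qed.

Lemma msum_le ds f g : (forall l, Forall2 lt l ds -> f l <= g l) -> msum ds f <= msum ds g.
Proof.
  revert f g; induction ds; simpl; intros f g H; [apply H; constructor|].
  apply rsum_le; intros. apply IHds; intros; apply H; constructor; auto.
Qed.

Lemma msum_zero ds : msum ds (fun _ => 0) = 0.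
Proof.
  induction ds; simpl; auto.
  rewrite (rsum_ext a _ (fun _ => 0)) by (intros; exact IHds). apply rsum_zero.
Qed.

Lemma msum_nonneg ds f : (forall l, Forall2 lt l ds -> 0 <= f l) -> 0 <= msum ds f.
Proof. intros H. rewrite <- (msum_zero ds). apply msum_le; auto. Qed.

Lemma msum_ge_term ds f ps :
  Forall2 lt ps ds -> (forall l, Forall2 lt l ds -> 0 <= f l) -> f ps <= msum ds f.
Proof.
  intros H; revert f; induction H as [|i m ps ds Him Hps IH]; simpl; intros f Hf; [lra|].
  apply Rle_trans with (msum ds (fun l => f (i :: l))).
  - apply (IH (fun l => f (i :: l))). intros; apply Hf; constructor; auto.
  - apply (rsum_ge_term _ (fun i => msum ds (fun l => f (i :: l)))); auto.
    intros. apply msum_nonneg. intros; apply Hf; constructor; auto.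
Qed.

Lemma msum_rsum_swap ds m (f : list nat -> nat -> R) :
  msum ds (fun l => rsum m (fun i => f l i)) = rsum m (fun i => msum ds (fun l => f l i)).
Proof.
  revert f; induction ds; simpl; intros; auto.
  rewrite <- rsum_swap. apply rsum_ext; intros. apply IHds.
Qed.

Lemma msum_swap ds1 ds2 (f : list nat -> list nat -> R) :
  msum ds1 (fun l1 => msum ds2 (fun l2 => f l1 l2))
  = msum ds2 (fun l2 => msum ds1 (fun l1 => f l1 l2)).
Proof.
  revert f; induction ds1; simpl; intros; auto.
  rewrite msum_rsum_swap. apply rsum_ext; intros.
  apply (IHds1 (fun l1 l2 => f (i :: l1) l2)).
Qed.

Lemma msum_app ds1 ds2 f :
  msum (ds1 ++ ds2) f = msum ds1 (fun l1 => msum ds2 (fun l2 => f (l1 ++ l2))).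
Proof.
  revert f; induction ds1; simpl; intros; auto.
  apply rsum_ext; intros. rewrite IHds1. reflexivity.
Qed.

(** * Cauchy-Schwarz and Minkowski inequalities *)

Lemma quadratic_nonneg_discr a b c :
  0 <= a -> (forall t, 0 <= a * t ^ 2 + 2 * b * t + c) -> b ^ 2 <= a * c.
Proof.
  intros Ha H. destruct (Req_dec a 0) as [->|Ha0].
  - destruct (Req_dec b 0) as [->|Hb]; [lra|].
    specialize (H (- (c + 1) / (2 * b))).
    replace (0 * (- (c + 1) / (2 * b)) ^ 2 + 2 * b * (- (c + 1) / (2 * b)) + c)
      with (-1) in H by (field; auto). lra.
  - specialize (H (- b / a)).
    replace (a * (- b / a) ^ 2 + 2 * b * (- b / a) + c) with ((a * c - b ^ 2) / a) in H
      by (field; auto).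
    assert (0 <= a * c - b ^ 2); [|lra].
    replace (a * c - b ^ 2) with ((a * c - b ^ 2) / a * a) by (field; auto).
    apply Rmult_le_pos; lra.
Qed.

Lemma msum_sq_expand ds t f g :
  msum ds (fun l => (t * f l + g l) ^ 2)
  = msum ds (fun l => f l ^ 2) * t ^ 2 + 2 * msum ds (fun l => f l * g l) * t
    + msum ds (fun l => g l ^ 2).
Proof.
  transitivity (msum ds (fun l => t ^ 2 * f l ^ 2 + 2 * t * (f l * g l) + g l ^ 2)).
  - apply msum_ext; intros; ring.
  - rewrite !msum_add, !msum_scal. ring.
Qed.

Lemma msum_Cauchy_Schwarz ds f g :
  (msum ds (fun l => f l * g l)) ^ 2
  <= msum ds (fun l => f l ^ 2) * msum ds (fun l => g l ^ 2).
Proof.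
  apply quadratic_nonneg_discr.
  - apply msum_nonneg; intros; apply pow2_ge_0.
  - intros t. rewrite <- msum_sq_expand. apply msum_nonneg; intros; apply pow2_ge_0.
Qed.

Lemma rsum_Cauchy_Schwarz m f g :
  (rsum m (fun i => f i * g i)) ^ 2 <= rsum m (fun i => f i ^ 2) * rsum m (fun i => g i ^ 2).
Proof.
  exact (msum_Cauchy_Schwarz (m :: nil) (fun l => f (hd 0%nat l)) (fun l => g (hd 0%nat l))).
Qed.

Lemma sqrt_le_of_sq_le x y : 0 <= y -> x <= y ^ 2 -> sqrt x <= y.
Proof. intros Hy H. rewrite <- (sqrt_pow2 y Hy). apply sqrt_le_1_alt; auto. Qed.

Lemma msum_Minkowski ds f g :
  sqrt (msum ds (fun l => (f l + g l) ^ 2))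
  <= sqrt (msum ds (fun l => f l ^ 2)) + sqrt (msum ds (fun l => g l ^ 2)).
Proof.
  pose proof (msum_sq_expand ds 1 f g) as E.
  pose proof (msum_Cauchy_Schwarz ds f g) as HCS.
  set (a := msum ds (fun l => f l ^ 2)) in *. set (c := msum ds (fun l => g l ^ 2)) in *.
  set (b := msum ds (fun l => f l * g l)) in *.
  assert (Ha : 0 <= a) by (apply msum_nonneg; intros; apply pow2_ge_0).
  assert (Hc : 0 <= c) by (apply msum_nonneg; intros; apply pow2_ge_0).
  assert (Hb : b <= sqrt a * sqrt c).
  { rewrite <- sqrt_mult by auto. destruct (Rle_lt_dec b 0).
    - pose proof (sqrt_pos (a * c)); lra.
    - rewrite <- (sqrt_pow2 b) by lra. apply sqrt_le_1_alt; auto. }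
  rewrite (msum_ext ds _ (fun l => (1 * f l + g l) ^ 2)) by (intros; ring).
  rewrite E, pow1, !Rmult_1_r.
  pose proof (sqrt_pos a); pose proof (sqrt_pos c).
  apply sqrt_le_of_sq_le; [lra|].
  replace ((sqrt a + sqrt c) ^ 2) with (sqrt a * sqrt a + sqrt c * sqrt c + 2 * (sqrt a * sqrt c))
    by ring.
  rewrite !sqrt_sqrt by auto. lra.
Qed.

Lemma msum_Minkowski_rsum ds m (t : nat -> list nat -> R) :
  sqrt (msum ds (fun l => (rsum m (fun i => t i l)) ^ 2))
  <= rsum m (fun i => sqrt (msum ds (fun l => (t i l) ^ 2))).
Proof.
  induction m as [|m IH]; simpl.
  - rewrite (msum_ext ds _ (fun _ => 0)) by (intros; ring). rewrite msum_zero, sqrt_0. lra.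
  - eapply Rle_trans; [apply (msum_Minkowski ds (fun l => rsum m (fun i => t i l)) (t m))|].
    apply Rplus_le_compat_r; exact IH.
Qed.

(** * Operator bounds and the spectral norm *)

Definition frob2 ds m (M : list nat -> nat -> R) : R :=
  msum ds (fun r => rsum m (fun c => (M r c) ^ 2)).

Definition op_bound ds m (M : list nat -> nat -> R) (al : R) : Prop :=
  0 <= al /\ forall x,
    msum ds (fun r => (rsum m (fun c => M r c * x c)) ^ 2) <= al ^ 2 * rsum m (fun c => (x c) ^ 2).

Lemma frob2_nonneg ds m M : 0 <= frob2 ds m M.
Proof. apply msum_nonneg; intros; apply rsum_nonneg; intros; apply pow2_ge_0. Qed.

Lemma op_bound_frob ds m M : op_bound ds m M (sqrt (frob2 ds m M)).
Proof.
  split; [apply sqrt_pos|]. intros x.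
  rewrite pow2_sqrt by apply frob2_nonneg. unfold frob2.
  rewrite Rmult_comm, <- msum_scal. apply msum_le; intros.
  rewrite Rmult_comm. apply rsum_Cauchy_Schwarz.
Qed.

Lemma op_bound_mono ds m M a b : op_bound ds m M a -> a <= b -> op_bound ds m M b.
Proof.
  intros [Ha H] Hab. split; [lra|]. intros x. eapply Rle_trans; [apply H|].
  apply Rmult_le_compat_r; [apply rsum_nonneg; intros; apply pow2_ge_0|].
  apply pow_incr; lra.
Qed.

Lemma op_bound_ext ds m M N a :
  (forall r c, M r c = N r c) -> op_bound ds m M a -> op_bound ds m N a.
Proof.
  intros E [Ha H]. split; auto. intros x. eapply Rle_trans; [|apply H]. right.
  apply msum_ext; intros; f_equal. apply rsum_ext; intros; rewrite E; auto.
Qed.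

Lemma sqrt_le_mult_sqrt X a s :
  0 <= a -> 0 <= s -> X <= a ^ 2 * s -> sqrt X <= a * sqrt s.
Proof.
  intros Ha Hs H. rewrite <- (sqrt_pow2 a Ha), <- sqrt_mult by (auto; apply pow2_ge_0).
  apply sqrt_le_1_alt; exact H.
Qed.

Lemma op_bound_add ds m M N a b :
  op_bound ds m M a -> op_bound ds m N b -> op_bound ds m (fun r c => M r c + N r c) (a + b).
Proof.
  intros [Ha HM] [Hb HN]. split; [lra|]. intros x.
  set (s := rsum m (fun c => (x c) ^ 2)).
  assert (Hs : 0 <= s) by (apply rsum_nonneg; intros; apply pow2_ge_0).
  rewrite (msum_ext ds _ (fun r =>
             (rsum m (fun c => M r c * x c) + rsum m (fun c => N r c * x c)) ^ 2))
    by (intros; f_equal; rewrite <- rsum_add; apply rsum_ext; intros; ring).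
  pose proof (msum_Minkowski ds (fun r => rsum m (fun c => M r c * x c))
                (fun r => rsum m (fun c => N r c * x c))) as Hmin.
  pose proof (sqrt_le_mult_sqrt _ _ _ Ha Hs (HM x)) as H1.
  pose proof (sqrt_le_mult_sqrt _ _ _ Hb Hs (HN x)) as H2.
  set (X := msum ds _) in *.
  assert (HX : 0 <= X) by (apply msum_nonneg; intros; apply pow2_ge_0).
  rewrite <- (pow2_sqrt X HX), <- (pow2_sqrt s Hs), <- Rpow_mult_distr.
  apply pow_incr. split; [apply sqrt_pos | lra].
Qed.

Definition spec_values ds m (M : list nat -> nat -> R) (y : R) : Prop :=
  y = 0 \/ exists x : nat -> R, rsum m (fun c => (x c) ^ 2) = 1 /\
    y = sqrt (msum ds (fun r => (rsum m (fun c => M r c * x c)) ^ 2)).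

Lemma spec_norm_lub ds m M : is_lub (spec_values ds m M) (spec_norm ds m M).
Proof.
  unfold spec_norm. apply epsilon_spec.
  destruct (completeness (spec_values ds m M)) as [z Hz].
  - exists (sqrt (frob2 ds m M)). intros y [->|[x [Hx ->]]]; [apply sqrt_pos|].
    destruct (op_bound_frob ds m M) as [H0 H]. apply sqrt_le_of_sq_le; auto.
    rewrite <- (Rmult_1_r (_ ^ 2)), <- Hx. apply H.
  - exists 0; left; reflexivity.
  - exists z; exact Hz.
Qed.

Lemma spec_norm_nonneg ds m M : 0 <= spec_norm ds m M.
Proof. apply (proj1 (spec_norm_lub ds m M)). left; reflexivity. Qed.

Lemma spec_norm_le ds m M K : 0 <= K ->
  (forall x, rsum m (fun c => (x c) ^ 2) = 1 ->
     msum ds (fun r => (rsum m (fun c => M r c * x c)) ^ 2) <= K ^ 2) ->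
  spec_norm ds m M <= K.
Proof.
  intros HK H. apply (proj2 (spec_norm_lub ds m M)).
  intros y [->|[x [Hx ->]]]; auto. apply sqrt_le_of_sq_le; auto.
Qed.

Lemma msum_apply_scal ds m M k x :
  msum ds (fun r => (rsum m (fun c => M r c * (k * x c))) ^ 2)
  = k ^ 2 * msum ds (fun r => (rsum m (fun c => M r c * x c)) ^ 2).
Proof.
  rewrite <- msum_scal. apply msum_ext; intros.
  rewrite <- Rpow_mult_distr, <- rsum_scal. f_equal. apply rsum_ext; intros; ring.
Qed.

Lemma op_bound_spec_norm ds m M : op_bound ds m M (spec_norm ds m M).
Proof.
  split; [apply spec_norm_nonneg|]. intros x.
  set (s := rsum m (fun c => (x c) ^ 2)).
  assert (Hs : 0 <= s) by (apply rsum_nonneg; intros; apply pow2_ge_0).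
  destruct (Req_dec s 0) as [Hs0|Hs0].
  - rewrite Hs0, Rmult_0_r, <- (msum_zero ds). apply msum_le; intros.
    eapply Rle_trans; [apply rsum_Cauchy_Schwarz|]. fold s. rewrite Hs0. lra.
  - set (k := / sqrt s).
    assert (Hk2 : k ^ 2 = / s) by (unfold k; rewrite pow_inv, pow2_sqrt; lra).
    assert (Hy : rsum m (fun c => (k * x c) ^ 2) = 1).
    { rewrite (rsum_ext m _ (fun c => k ^ 2 * (x c) ^ 2)) by (intros; ring).
      rewrite rsum_scal, Hk2. fold s. field. lra. }
    assert (Hle := proj1 (spec_norm_lub ds m M) _ (or_intror (ex_intro _ _ (conj Hy eq_refl)))).
    cbv beta in Hle. rewrite msum_apply_scal, Hk2 in Hle.
    set (X := msum ds _) in *.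
    assert (HX : 0 <= X) by (apply msum_nonneg; intros; apply pow2_ge_0).
    assert (H2 : / s * X <= spec_norm ds m M ^ 2).
    { rewrite <- (pow2_sqrt (/ s * X))
        by (apply Rmult_le_pos; [left; apply Rinv_0_lt_compat|]; lra).
      apply pow_incr. split; [apply sqrt_pos | exact Hle]. }
    replace X with (s * (/ s * X)) by (field; lra).
    rewrite Rmult_comm. apply Rmult_le_compat_r; lra.
Qed.

Lemma spec_norm_rank1_le ds m M F U v :
  0 <= F -> msum ds (fun r => (U r) ^ 2) = 1 -> rsum m (fun c => (v c) ^ 2) = 1 ->
  (forall r c, Forall2 lt r ds -> (c < m)%nat -> M r c = F * U r * v c) ->
  spec_norm ds m M <= F.
Proof.
  intros HF HU Hv HM. apply spec_norm_le; auto. intros x Hx.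
  rewrite (msum_ext ds _ (fun r => F ^ 2 * (rsum m (fun c => v c * x c)) ^ 2 * (U r) ^ 2)).
  - rewrite msum_scal, HU. pose proof (rsum_Cauchy_Schwarz m v x) as HCS.
    rewrite Hv, Hx in HCS. pose proof (pow2_ge_0 F). nra.
  - intros r Hr. rewrite <- (Rpow_mult_distr F), <- Rpow_mult_distr. f_equal.
    rewrite <- rsum_scal, Rmult_comm, <- rsum_scal. apply rsum_ext; intros.
    rewrite HM by auto. ring.
Qed.

(** * Left and right environments *)

Lemma pdims_length d i k : length (pdims d i k) = k.
Proof. unfold pdims. rewrite length_map, length_seq. reflexivity. Qed.

Lemma pdims_cons d i k : pdims d i (S k) = d i :: pdims d (i + 1) k.
Proof. unfold pdims. simpl. rewrite Nat.add_1_r. reflexivity. Qed.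

Lemma pdims_snoc d k : pdims d 1 (S k) = pdims d 1 k ++ d (S k) :: nil.
Proof. unfold pdims. rewrite seq_S, map_app. reflexivity. Qed.

Lemma pdims_split d n k : (k < n)%nat ->
  pdims d 1 n = pdims d 1 k ++ d (S k) :: pdims d (S k + 1) (n - S k).
Proof.
  intros Hk. rewrite <- pdims_cons. unfold pdims.
  replace n with (k + S (n - S k))%nat at 1 by lia.
  rewrite seq_app, map_app. reflexivity.
Qed.

Lemma skipn_middle k (l1 : list nat) p l2 : length l1 = k -> skipn (S k) (l1 ++ p :: l2) = l2.
Proof. revert k; induction l1; intros k Hk; simpl in *; subst; simpl; auto. Qed.

Lemma hd_skipn k (ps : list nat) : hd 0%nat (skipn k ps) = nth k ps 0%nat.
Proof. revert ps; induction k; destruct ps; simpl; auto. Qed.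

Lemma tl_skipn k (ps : list nat) : tl (skipn k ps) = skipn (S k) ps.
Proof. revert ps; induction k; destruct ps; simpl; auto. Qed.

Lemma lenv_app n D A k l l' b :
  (k <= length l)%nat -> lenv n D A k (l ++ l') b = lenv n D A k l b.
Proof.
  revert b; induction k; intros b Hk; simpl; auto. apply rsum_ext; intros.
  rewrite IHk, app_nth1 by lia. reflexivity.
Qed.

Lemma lenv_snoc n D A k l p b : length l = k ->
  lenv n D A (S k) (l ++ p :: nil) b
  = rsum (bdim n D k) (fun a => lenv n D A k l a * A (S k) a p b).
Proof.
  intros Hl. simpl. apply rsum_ext; intros.
  rewrite lenv_app, app_nth2, Hl, Nat.sub_diag by lia. reflexivity.
Qed.

Lemma lenv_ext n D A A' k :
  (forall j a p b, (1 <= j <= k)%nat -> A j a p b = A' j a p b) ->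
  forall ps b, lenv n D A k ps b = lenv n D A' k ps b.
Proof.
  induction k; intros H ps b; simpl; auto. apply rsum_ext; intros.
  rewrite IHk by (intros; apply H; lia). rewrite H by lia. reflexivity.
Qed.

Lemma renv_ext n D A A' k : (k <= n)%nat ->
  (forall j a p b, (n - k < j)%nat -> A j a p b = A' j a p b) ->
  forall ps b, renv n D A k ps b = renv n D A' k ps b.
Proof.
  induction k; intros Hk H ps b; simpl; auto. apply rsum_ext; intros.
  rewrite IHk by (try lia; intros; apply H; lia). rewrite H by lia. reflexivity.
Qed.

Lemma contr_lenv_renv n D A ps m : (m <= n)%nat ->
  contr n D A ps
  = rsum (bdim n D (n - m))
      (fun a => lenv n D A (n - m) ps a * renv n D A m (skipn (n - m) ps) a).
Proof.
  induction m as [|m IH]; intros Hm.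
  - rewrite Nat.sub_0_r. unfold bdim. rewrite Nat.leb_refl, Bool.orb_true_r.
    simpl. unfold contr. ring.
  - rewrite IH by lia. set (k := (n - S m)%nat). replace (n - m)%nat with (S k) by lia.
    cbn [lenv renv]. replace (n - m)%nat with (S k) by lia.
    rewrite hd_skipn, tl_skipn.
    transitivity (rsum (bdim n D (S k)) (fun c => rsum (bdim n D k) (fun a =>
      lenv n D A k ps a * A (S k) a (nth k ps 0%nat) c * renv n D A m (skipn (S k) ps) c))).
    + apply rsum_ext; intros. rewrite Rmult_comm, <- rsum_scal. apply rsum_ext; intros; ring.
    + rewrite <- rsum_swap. apply rsum_ext; intros.
      rewrite <- rsum_scal. apply rsum_ext; intros; ring.
Qed.

Lemma contr_site n D A ps k : (k < n)%nat ->
  contr n D A ps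
  = rsum (bdim n D k) (fun a => rsum (bdim n D (S k)) (fun c =>
      lenv n D A k ps a * A (S k) a (nth k ps 0%nat) c
      * renv n D A (n - S k) (skipn (S k) ps) c)).
Proof.
  intros Hk. rewrite (contr_lenv_renv n D A ps (n - k)) by lia.
  replace (n - (n - k))%nat with k by lia. apply rsum_ext; intros.
  replace (n - k)%nat with (S (n - S k)) by lia. cbn [renv].
  replace (n - (n - S k))%nat with (S k) by lia. rewrite hd_skipn, tl_skipn.
  rewrite <- rsum_scal. apply rsum_ext; intros; ring.
Qed.

Definition hybrid (A B : site_tensors) (k : nat) : site_tensors :=
  fun j => if (j <=? k)%nat then B j else A j.

Definition site_term n D (A delta : site_tensors) k ps : R :=
  rsum (bdim n D k) (fun a => rsum (bdim n D (S k)) (fun c =>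
    lenv n D (tadd A delta) k ps a * delta (S k) a (nth k ps 0%nat) c
    * renv n D A (n - S k) (skipn (S k) ps) c)).

Lemma contr_hybrid_step n D A delta ps k : (k < n)%nat ->
  contr n D (hybrid A (tadd A delta) (S k)) ps - contr n D (hybrid A (tadd A delta) k) ps
  = site_term n D A delta k ps.
Proof.
  intros Hk. rewrite !(contr_site n D _ ps k Hk). unfold site_term.
  rewrite <- rsum_sub. apply rsum_ext; intros a _.
  rewrite <- rsum_sub. apply rsum_ext; intros c _.
  assert (Hin : forall m j, (j <= m)%nat -> hybrid A (tadd A delta) m j = tadd A delta j)
    by (intros m j Hj; unfold hybrid; rewrite (proj2 (Nat.leb_le j m) Hj); reflexivity).
  assert (Hout : forall m j, (m < j)%nat -> hybrid A (tadd A delta) m j = A j)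
    by (intros m j Hj; unfold hybrid; rewrite (proj2 (Nat.leb_gt j m) Hj); reflexivity).
  rewrite !(lenv_ext n D (hybrid A (tadd A delta) _) (tadd A delta))
    by (intros; rewrite Hin by lia; reflexivity).
  rewrite !(renv_ext n D (hybrid A (tadd A delta) _) A)
    by (try lia; intros; rewrite Hout by lia; reflexivity).
  rewrite Hin, Hout by lia. unfold tadd. ring.
Qed.

Lemma contr_perturbation_telescope n D A delta ps :
  contr n D (tadd A delta) ps - contr n D A ps = rsum n (fun k => site_term n D A delta k ps).
Proof.
  replace (contr n D (tadd A delta) ps) with (contr n D (hybrid A (tadd A delta) n) ps)
    by (apply lenv_ext; intros j a p b Hj; unfold hybrid;
        rewrite (proj2 (Nat.leb_le j n)) by lia; reflexivity).
  replace (contr n D A ps) with (contr n D (hybrid A (tadd A delta) 0) ps)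
    by (apply lenv_ext; intros [|j] a p b Hj; [lia | reflexivity]).
  assert (G : forall m, (m <= n)%nat ->
    contr n D (hybrid A (tadd A delta) m) ps - contr n D (hybrid A (tadd A delta) 0) ps
    = rsum m (fun k => site_term n D A delta k ps)).
  { induction m as [|m IH]; intros Hm; simpl; [ring|].
    rewrite <- IH, <- contr_hybrid_step by lia. ring. }
  apply G; lia.
Qed.

(** * The first-order bound *)

Lemma sandwich_sq_le ds1 m1 ds2 ma mc L (X : nat -> nat -> nat -> R) Rm al be :
  op_bound ds1 ma L al -> op_bound ds2 mc Rm be ->
  msum ds1 (fun l1 => rsum m1 (fun p => msum ds2 (fun l2 =>
    (rsum ma (fun a => rsum mc (fun c => L l1 a * X a p c * Rm l2 c))) ^ 2)))
  <= al ^ 2 * be ^ 2 * rsum ma (fun a => rsum m1 (fun p => rsum mc (fun c => (X a p c) ^ 2))).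
Proof.
  intros [Hal HL] [Hbe HR].
  transitivity (rsum m1 (fun p => msum ds2 (fun l2 => msum ds1 (fun l1 =>
    (rsum ma (fun a => L l1 a * rsum mc (fun c => Rm l2 c * X a p c))) ^ 2)))).
  { right. rewrite msum_rsum_swap. apply rsum_ext; intros p _.
    rewrite msum_swap. apply msum_ext; intros l2 _. apply msum_ext; intros l1 _.
    f_equal. apply rsum_ext; intros a _. rewrite <- rsum_scal. apply rsum_ext; intros; ring. }
  transitivity (rsum m1 (fun p =>
    al ^ 2 * (be ^ 2 * rsum ma (fun a => rsum mc (fun c => (X a p c) ^ 2))))).
  - apply rsum_le; intros p _.
    transitivity (msum ds2 (fun l2 =>
      al ^ 2 * rsum ma (fun a => (rsum mc (fun c => Rm l2 c * X a p c)) ^ 2))).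
    { apply msum_le; intros l2 _. apply HL. }
    rewrite msum_scal, msum_rsum_swap.
    apply Rmult_le_compat_l; [apply pow2_ge_0|].
    rewrite <- rsum_scal. apply rsum_le; intros a _. apply HR.
  - right. rewrite !rsum_scal, <- Rmult_assoc, rsum_swap. reflexivity.
Qed.

Lemma left_contract_sq_le ds m1 mb ma M (Y : nat -> nat -> nat -> R) :
  msum ds (fun l => rsum m1 (fun p => rsum mb (fun b => (rsum ma (fun a => M l a * Y a p b)) ^ 2)))
  <= frob2 ds ma M * rsum ma (fun a => rsum m1 (fun p => rsum mb (fun b => (Y a p b) ^ 2))).
Proof.
  unfold frob2. rewrite Rmult_comm, <- msum_scal. apply msum_le; intros l _.
  rewrite (rsum_swap ma m1), Rmult_comm, <- rsum_scal. apply rsum_le; intros p _.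
  rewrite (rsum_swap ma mb), <- rsum_scal. apply rsum_le; intros b _.
  apply rsum_Cauchy_Schwarz.
Qed.

Definition site_sq n d D (X : site_tensors) k : R :=
  rsum (bdim n D k) (fun a => rsum (d (S k)) (fun p =>
    rsum (bdim n D (S k)) (fun b => (X (S k) a p b) ^ 2))).

Lemma fro_site_S n d D X k : fro_site n d D X (S k) = sqrt (site_sq n d D X k).
Proof. unfold fro_site, site_sq. rewrite Nat.sub_succ, Nat.sub_0_r. reflexivity. Qed.

Lemma site_sq_nonneg n d D X k : 0 <= site_sq n d D X k.
Proof. unfold site_sq. repeat (apply rsum_nonneg; intros). apply pow2_ge_0. Qed.

Lemma sq_add_le a b : (a + b) ^ 2 <= 2 * a ^ 2 + 2 * b ^ 2.
Proof. pose proof (pow2_ge_0 (a - b)). nra. Qed.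

Lemma site_sq_tadd_le n d D A delta k :
  site_sq n d D (tadd A delta) k <= 2 * site_sq n d D A k + 2 * site_sq n d D delta k.
Proof.
  unfold site_sq. rewrite <- !rsum_scal, <- rsum_add. apply rsum_le; intros.
  rewrite <- !rsum_scal, <- rsum_add. apply rsum_le; intros.
  rewrite <- !rsum_scal, <- rsum_add. apply rsum_le; intros. apply sq_add_le.
Qed.

Lemma site_sq_perturbation_le n d D A delta eps k : (k < n)%nat -> 0 < eps ->
  is_eps_perturbation n d D A delta eps -> site_sq n d D delta k <= eps ^ 2 * site_sq n d D A k.
Proof.
  intros Hk He H. specialize (H (S k) ltac:(lia)). rewrite !fro_site_S in H.
  rewrite <- (pow2_sqrt (site_sq n d D delta k)), <- (pow2_sqrt (site_sq n d D A k))
    by apply site_sq_nonneg.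
  rewrite <- Rpow_mult_distr. apply pow_incr. split; [apply sqrt_pos | exact H].
Qed.

Definition lenv_err2 n d D (A delta : site_tensors) k : R :=
  frob2 (pdims d 1 k) (bdim n D k)
    (fun ps b => lenv n D (tadd A delta) k ps b - lenv n D A k ps b).

Lemma lenv_err_snoc_sq_le n D A delta k l p b : length l = k ->
  (lenv n D (tadd A delta) (S k) (l ++ p :: nil) b - lenv n D A (S k) (l ++ p :: nil) b) ^ 2
  <= 2 * (rsum (bdim n D k) (fun a =>
            (lenv n D (tadd A delta) k l a - lenv n D A k l a) * tadd A delta (S k) a p b)) ^ 2
   + 2 * (rsum (bdim n D k) (fun a => lenv n D A k l a * delta (S k) a p b)) ^ 2.
Proof.
  intros Hl. rewrite !lenv_snoc by exact Hl.
  eapply Rle_trans; [|apply sq_add_le]. right. f_equal.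
  rewrite <- rsum_sub, <- rsum_add. apply rsum_ext; intros. unfold tadd. ring.
Qed.

Lemma lenv_err2_step n d D A delta k :
  lenv_err2 n d D A delta (S k)
  <= 2 * lenv_err2 n d D A delta k * site_sq n d D (tadd A delta) k
   + 2 * frob2 (pdims d 1 k) (bdim n D k) (lenv n D A k) * site_sq n d D delta k.
Proof.
  set (B := tadd A delta).
  set (E := fun l a => lenv n D B k l a - lenv n D A k l a).
  set (S3 := fun (F : list nat -> nat -> nat -> R) =>
    msum (pdims d 1 k) (fun l => rsum (d (S k)) (fun p =>
      rsum (bdim n D (S k)) (fun b => F l p b)))).
  transitivity
    (2 * S3 (fun l p b => (rsum (bdim n D k) (fun a => E l a * B (S k) a p b)) ^ 2)
   + 2 * S3 (fun l p b =>
           (rsum (bdim n D k) (fun a => lenv n D A k l a * delta (S k) a p b)) ^ 2)).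
  - unfold S3. rewrite <- !msum_scal, <- msum_add.
    unfold lenv_err2, frob2 at 1. rewrite pdims_snoc, msum_app.
    apply msum_le; intros l Hl. apply Forall2_length in Hl. rewrite pdims_length in Hl.
    cbn [msum]. rewrite <- !rsum_scal, <- rsum_add. apply rsum_le; intros p _.
    rewrite <- !rsum_scal, <- rsum_add. apply rsum_le; intros b _.
    apply lenv_err_snoc_sq_le; exact Hl.
  - rewrite !Rmult_assoc. apply Rplus_le_compat; apply Rmult_le_compat_l; try lra.
    + apply (left_contract_sq_le _ _ _ _ E (fun a p b => B (S k) a p b)).
    + apply (left_contract_sq_le _ _ _ _ (lenv n D A k) (fun a p b => delta (S k) a p b)).
Qed.

(* Solves the recursion of [lenv_err2_step] with [site_sq (tadd A delta) k <= 4 site_sq A k]. *)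
Fixpoint lenv_err_coeff n d D (A : site_tensors) k : R :=
  match k with
  | O => 0
  | S k' => 8 * lenv_err_coeff n d D A k' * site_sq n d D A k'
            + 2 * frob2 (pdims d 1 k') (bdim n D k') (lenv n D A k') * site_sq n d D A k'
  end.

Lemma lenv_err_coeff_nonneg n d D A k : 0 <= lenv_err_coeff n d D A k.
Proof.
  induction k; simpl; [lra|].
  pose proof (site_sq_nonneg n d D A k).
  pose proof (frob2_nonneg (pdims d 1 k) (bdim n D k) (lenv n D A k)).
  apply Rplus_le_le_0_compat; repeat apply Rmult_le_pos; lra.
Qed.

Lemma lenv_err2_le n d D A delta eps : 0 < eps <= 1 -> is_eps_perturbation n d D A delta eps ->
  forall k, (k <= n)%nat -> lenv_err2 n d D A delta k <= lenv_err_coeff n d D A k * eps ^ 2.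
Proof.
  intros He Hp. induction k as [|k IH]; intros Hk.
  - unfold lenv_err2, frob2. simpl. nra.
  - eapply Rle_trans; [apply lenv_err2_step|].
    specialize (IH ltac:(lia)).
    pose proof (site_sq_nonneg n d D A k).
    pose proof (site_sq_nonneg n d D (tadd A delta) k).
    pose proof (frob2_nonneg (pdims d 1 k) (bdim n D k) (lenv n D A k)) as HF.
    assert (HE : 0 <= lenv_err2 n d D A delta k) by apply frob2_nonneg.
    pose proof (lenv_err_coeff_nonneg n d D A k).
    pose proof (site_sq_perturbation_le n d D A delta eps k ltac:(lia) ltac:(lra) Hp) as Hdl.
    pose proof (site_sq_tadd_le n d D A delta k).
    assert (eps ^ 2 <= 1) by nra.
    assert (HB4 : site_sq n d D (tadd A delta) k <= 4 * site_sq n d D A k) by nra.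
    assert (T1 : lenv_err2 n d D A delta k * site_sq n d D (tadd A delta) k
                 <= (lenv_err_coeff n d D A k * eps ^ 2) * (4 * site_sq n d D A k))
      by (apply Rmult_le_compat; auto).
    assert (T2 := Rmult_le_compat_l _ _ _ HF Hdl).
    simpl lenv_err_coeff. nra.
Qed.

Lemma lnorm_S n d D A k :
  lnorm n d D A (S k) = spec_norm (pdims d 1 k) (bdim n D k) (lenv n D A k).
Proof. unfold lnorm. rewrite Nat.sub_succ, Nat.sub_0_r. reflexivity. Qed.

Lemma op_bound_lenv_perturbed n d D A delta eps k :
  0 < eps <= 1 -> is_eps_perturbation n d D A delta eps -> (k <= n)%nat ->
  op_bound (pdims d 1 k) (bdim n D k) (lenv n D (tadd A delta) k)
    (lnorm n d D A (S k) + sqrt (lenv_err_coeff n d D A k) * eps).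
Proof.
  intros He Hp Hk.
  apply (op_bound_ext _ _ (fun r c => lenv n D A k r c
                          + (lenv n D (tadd A delta) k r c - lenv n D A k r c)));
    [intros; ring|].
  eapply op_bound_mono; [apply op_bound_add; [apply op_bound_spec_norm | apply op_bound_frob]|].
  rewrite lnorm_S. apply Rplus_le_compat_l.
  rewrite <- (sqrt_pow2 eps), <- sqrt_mult
    by (first [apply lenv_err_coeff_nonneg | apply pow2_ge_0 | lra]).
  apply sqrt_le_1_alt. apply lenv_err2_le; auto.
Qed.

Lemma site_term_sq n d D A delta k : (k < n)%nat ->
  msum (pdims d 1 n) (fun ps => (site_term n D A delta k ps) ^ 2)
  = msum (pdims d 1 k) (fun l1 => rsum (d (S k)) (fun p =>
      msum (pdims d (S k + 1) (n - S k)) (fun l2 =>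
        (rsum (bdim n D k) (fun a => rsum (bdim n D (S k)) (fun c =>
          lenv n D (tadd A delta) k l1 a * delta (S k) a p c
          * renv n D A (n - S k) l2 c))) ^ 2))).
Proof.
  intros Hk. rewrite (pdims_split d n k Hk), msum_app. apply msum_ext; intros l1 Hl1.
  apply Forall2_length in Hl1. rewrite pdims_length in Hl1.
  cbn [msum]. apply rsum_ext; intros p _. apply msum_ext; intros l2 _. f_equal.
  unfold site_term. apply rsum_ext; intros a _; apply rsum_ext; intros c _.
  rewrite lenv_app, app_nth2, Hl1, Nat.sub_diag, (skipn_middle k) by lia. reflexivity.
Qed.

Lemma site_term_norm_le n d D A delta eps k :
  (k < n)%nat -> 0 < eps <= 1 -> is_eps_perturbation n d D A delta eps ->
  sqrt (msum (pdims d 1 n) (fun ps => (site_term n D A delta k ps) ^ 2))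
  <= (lnorm n d D A (S k) + sqrt (lenv_err_coeff n d D A k) * eps)
     * (eps * fro_site n d D A (S k)) * rnorm n d D A (S k).
Proof.
  intros Hk He Hp.
  pose proof (op_bound_lenv_perturbed n d D A delta eps k He Hp ltac:(lia)) as HL.
  pose proof (op_bound_spec_norm (pdims d (S k + 1) (n - S k)) (bdim n D (S k))
                (renv n D A (n - S k))) as HR.
  fold (rnorm n d D A (S k)) in HR.
  pose proof (sandwich_sq_le _ (d (S k)) _ _ _ _ (fun a p c => delta (S k) a p c) _ _ _ HL HR)
    as HT.
  rewrite <- site_term_sq in HT by exact Hk. fold (site_sq n d D delta k) in HT.
  pose proof (site_sq_perturbation_le n d D A delta eps k Hk ltac:(lra) Hp).
  destruct HL as [Hal _]. destruct HR as [Hr _].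
  set (al := lnorm n d D A (S k) + sqrt (lenv_err_coeff n d D A k) * eps) in *.
  set (r := rnorm n d D A (S k)) in *.
  rewrite fro_site_S, <- (sqrt_pow2 eps) by lra.
  rewrite <- sqrt_mult by (try apply site_sq_nonneg; apply pow2_ge_0).
  apply sqrt_le_of_sq_le; [apply Rmult_le_pos; [apply Rmult_le_pos|]; auto using sqrt_pos|].
  rewrite !Rpow_mult_distr, pow2_sqrt
    by (apply Rmult_le_pos; [apply pow2_ge_0 | apply site_sq_nonneg]).
  eapply Rle_trans; [apply HT|].
  replace (al ^ 2 * (eps ^ 2 * site_sq n d D A k) * r ^ 2)
    with (al ^ 2 * r ^ 2 * (eps ^ 2 * site_sq n d D A k)) by ring.
  apply Rmult_le_compat_l; [apply Rmult_le_pos; apply pow2_ge_0 | assumption].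
Qed.

Lemma fro_full_pos n d D A :
  (exists ps, Forall2 lt ps (pdims d 1 n) /\ contr n D A ps <> 0) -> 0 < fro_full n d D A.
Proof.
  intros [ps [Hps Hc]]. apply sqrt_lt_R0.
  apply Rlt_le_trans with ((contr n D A ps) ^ 2).
  - pose proof (pow_nonzero _ 2 Hc). pose proof (pow2_ge_0 (contr n D A ps)). lra.
  - apply (msum_ge_term _ (fun ps => (contr n D A ps) ^ 2)); auto. intros; apply pow2_ge_0.
Qed.

Lemma contr_perturbation_norm_le n d D A delta eps :
  0 < eps <= 1 -> is_eps_perturbation n d D A delta eps ->
  sqrt (msum (pdims d 1 n) (fun ps => (contr n D (tadd A delta) ps - contr n D A ps) ^ 2))
  <= eps * rsum n (fun k => lnorm n d D A (S k) * fro_site n d D A (S k) * rnorm n d D A (S k))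
   + eps ^ 2 * rsum n (fun k => sqrt (lenv_err_coeff n d D A k)
                                * fro_site n d D A (S k) * rnorm n d D A (S k)).
Proof.
  intros He Hp.
  rewrite (msum_ext _ _ (fun ps => (rsum n (fun k => site_term n D A delta k ps)) ^ 2))
    by (intros; rewrite contr_perturbation_telescope; reflexivity).
  eapply Rle_trans; [apply msum_Minkowski_rsum|].
  rewrite <- !rsum_scal, <- rsum_add. apply rsum_le; intros k Hk.
  eapply Rle_trans; [apply (site_term_norm_le n d D A delta eps k Hk He Hp)|]. right; ring.
Qed.

Lemma rel_err_first_order_le n d D A :
  (exists ps, Forall2 lt ps (pdims d 1 n) /\ contr n D A ps <> 0) ->
  exists C eps0, 0 < eps0 /\
    forall eps delta, 0 < eps < eps0 -> is_eps_perturbation n d D A delta eps ->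
      rel_err n d D A delta <= eps * first_order_coeff n d D A + C * eps ^ 2.
Proof.
  intros Hne. pose proof (fro_full_pos n d D A Hne) as HF.
  set (F := fro_full n d D A) in *.
  exists (rsum n (fun k => sqrt (lenv_err_coeff n d D A k)
                           * fro_site n d D A (S k) * rnorm n d D A (S k)) / F), 1.
  split; [lra|]. intros eps delta He Hp.
  pose proof (contr_perturbation_norm_le n d D A delta eps ltac:(lra) Hp) as Hkey.
  unfold rel_err, first_order_coeff. fold F. rewrite rsum_div.
  set (S1 := rsum n (fun k => lnorm n d D A (S k) * fro_site n d D A (S k) * rnorm n d D A (S k)))
    in *.
  set (S2 := rsum n (fun k => sqrt (lenv_err_coeff n d D A k)
                              * fro_site n d D A (S k) * rnorm n d D A (S k))) in *.
  replace (eps * (S1 / F) + S2 / F * eps ^ 2) with ((eps * S1 + eps ^ 2 * S2) / F)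
    by (field; lra).
  unfold Rdiv. apply Rmult_le_compat_r; [left; apply Rinv_0_lt_compat|]; assumption.
Qed.

(** * Tightness for product states *)

Section ProductState.

Variables (n : nat) (d D : nat -> nat) (A : site_tensors) (u w : nat -> nat -> R).
Hypothesis Hu : forall j, (1 <= j <= n)%nat -> rsum (d j) (fun p => (u j p) ^ 2) = 1.
Hypothesis Hw : forall j, (1 <= j < n)%nat -> rsum (D j) (fun b => (w j b) ^ 2) = 1.
Hypothesis HA : forall j a p b, (1 <= j <= n)%nat -> (a < bdim n D (j - 1))%nat ->
  (p < d j)%nat -> (b < bdim n D j)%nat ->
  A j a p b = fro_site n d D A j * bvec n w (j - 1) a * u j p * bvec n w j b.

Let f := fro_site n d D A.

Fixpoint left_weight k : R := match k with O => 1 | S k' => left_weight k' * f (S k') end.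
Fixpoint right_weight k : R := match k with O => 1 | S k' => f (n - k')%nat * right_weight k' end.

Fixpoint left_vec k (ps : list nat) : R :=
  match k with O => 1 | S k' => left_vec k' ps * u (S k') (nth k' ps 0%nat) end.
Fixpoint right_vec k (ps : list nat) : R :=
  match k with O => 1 | S k' => u (n - k')%nat (hd 0%nat ps) * right_vec k' (tl ps) end.

Lemma left_weight_nonneg k : 0 <= left_weight k.
Proof. induction k; simpl; [lra|]. apply Rmult_le_pos; [exact IHk | apply sqrt_pos]. Qed.

Lemma right_weight_nonneg k : 0 <= right_weight k.
Proof. induction k; simpl; [lra|]. apply Rmult_le_pos; [apply sqrt_pos | exact IHk]. Qed.

Lemma left_weight_right_weight m :
  (m <= n)%nat -> left_weight (n - m) * right_weight m = left_weight n.
Proof.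
  induction m as [|m IH]; intros Hm; [rewrite Nat.sub_0_r; simpl; ring|].
  simpl right_weight. rewrite <- IH by lia.
  replace (n - m)%nat with (S (n - S m)) by lia. simpl left_weight. ring.
Qed.

Lemma bvec_norm j : rsum (bdim n D j) (fun a => (bvec n w j a) ^ 2) = 1.
Proof.
  unfold bdim, bvec. destruct (orb (j =? 0)%nat (n <=? j)%nat) eqn:E; [simpl; lra|].
  apply Bool.orb_false_iff in E. destruct E as [E1 E2].
  apply Nat.eqb_neq in E1. apply Nat.leb_gt in E2. apply Hw. lia.
Qed.

Lemma left_vec_app k l l' : (k <= length l)%nat -> left_vec k (l ++ l') = left_vec k l.
Proof. induction k; intros Hk; simpl; auto. rewrite IHk, app_nth1 by lia. reflexivity. Qed.

Lemma left_vec_norm k : (k <= n)%nat -> msum (pdims d 1 k) (fun ps => (left_vec k ps) ^ 2) = 1.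
Proof.
  induction k as [|k IH]; intros Hk; [simpl; ring|].
  rewrite pdims_snoc, msum_app, <- (IH ltac:(lia)). apply msum_ext; intros l Hl.
  apply Forall2_length in Hl. rewrite pdims_length in Hl. cbn [msum].
  rewrite (rsum_ext _ _ (fun p => (left_vec k l) ^ 2 * (u (S k) p) ^ 2)).
  - rewrite rsum_scal, Hu by lia. ring.
  - intros p _. simpl. rewrite left_vec_app, app_nth2, Hl, Nat.sub_diag by lia. simpl. ring.
Qed.

Lemma right_vec_norm k : (k <= n)%nat ->
  msum (pdims d (n - k + 1) k) (fun ps => (right_vec k ps) ^ 2) = 1.
Proof.
  induction k as [|k IH]; intros Hk; [simpl; ring|].
  replace (n - S k + 1)%nat with (n - k)%nat by lia.
  rewrite pdims_cons. cbn [msum].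
  rewrite (rsum_ext _ _ (fun p => (u (n - k)%nat p) ^ 2
                                  * msum (pdims d (n - k + 1) k) (fun l => (right_vec k l) ^ 2))).
  - rewrite IH by lia.
    rewrite (rsum_ext _ _ (fun p => (u (n - k)%nat p) ^ 2)) by (intros; ring).
    apply Hu; lia.
  - intros p _. rewrite <- msum_scal. apply msum_ext; intros. simpl. ring.
Qed.

Lemma lenv_product k : (k <= n)%nat -> forall ps, Forall2 lt ps (pdims d 1 k) ->
  forall b, (b < bdim n D k)%nat ->
  lenv n D A k ps b = left_weight k * left_vec k ps * bvec n w k b.
Proof.
  induction k as [|k IH]; intros Hk ps Hps b Hb.
  - unfold bdim in Hb. simpl in Hb. replace b with 0%nat by lia. unfold bvec. simpl. ring.
  - rewrite pdims_snoc in Hps. apply Forall2_app_inv_r in Hps.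
    destruct Hps as [l1 [l2 [H1 [H2 ->]]]].
    destruct l2 as [|p l2]; [inversion H2|].
    apply Forall2_cons_iff in H2 as [Hp H3]. inversion H3; subst.
    pose proof (Forall2_length H1) as Hl1. rewrite pdims_length in Hl1.
    rewrite lenv_snoc by exact Hl1.
    rewrite (rsum_ext _ _ (fun a => (left_weight k * f (S k) * left_vec k l1 * u (S k) p
                                     * bvec n w (S k) b) * (bvec n w k a) ^ 2)).
    + rewrite rsum_scal, bvec_norm. simpl.
      rewrite left_vec_app, app_nth2, Hl1, Nat.sub_diag by lia. simpl. ring.
    + intros a Ha. rewrite IH, HA by (rewrite ?Nat.sub_succ, ?Nat.sub_0_r; auto; lia).
      rewrite Nat.sub_succ, Nat.sub_0_r. unfold f. ring.
Qed.

Lemma renv_product k : (k <= n)%nat -> forall ps, Forall2 lt ps (pdims d (n - k + 1) k) ->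
  forall b, (b < bdim n D (n - k))%nat ->
  renv n D A k ps b = right_weight k * right_vec k ps * bvec n w (n - k) b.
Proof.
  induction k as [|k IH]; intros Hk ps Hps b Hb.
  - rewrite Nat.sub_0_r in *. unfold bdim in Hb. rewrite Nat.leb_refl, Bool.orb_true_r in Hb.
    replace b with 0%nat by lia. unfold bvec. rewrite Nat.leb_refl, Bool.orb_true_r. simpl. ring.
  - replace (n - S k + 1)%nat with (n - k)%nat in Hps by lia.
    rewrite pdims_cons in Hps.
    destruct ps as [|p ps']; [inversion Hps|]. apply Forall2_cons_iff in Hps as [Hp Hps'].
    cbn [renv hd tl].
    rewrite (rsum_ext _ _ (fun c => (f (n - k)%nat * right_weight k * u (n - k)%nat p
                                     * right_vec k ps' * bvec n w (n - S k) b)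
                                    * (bvec n w (n - k) c) ^ 2)).
    + rewrite rsum_scal, bvec_norm. simpl. ring.
    + intros c Hc. replace (n - S k)%nat with (n - k - 1)%nat in Hb |- * by lia.
      rewrite IH, HA by (auto; lia). unfold f. ring.
Qed.

Lemma fro_full_product : fro_full n d D A = left_weight n.
Proof.
  unfold fro_full. rewrite <- (sqrt_pow2 _ (left_weight_nonneg n)). f_equal.
  rewrite (msum_ext _ _ (fun ps => (left_weight n) ^ 2 * (left_vec n ps) ^ 2)).
  - rewrite msum_scal, left_vec_norm by lia. ring.
  - intros ps Hps. unfold contr. rewrite lenv_product by (auto; unfold bdim;
      rewrite Nat.leb_refl, Bool.orb_true_r; lia).
    unfold bvec. rewrite Nat.leb_refl, Bool.orb_true_r. ring.
Qed.

Lemma lnorm_product_le k : (k < n)%nat -> lnorm n d D A (S k) <= left_weight k.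
Proof.
  intros Hk. rewrite lnorm_S.
  apply (spec_norm_rank1_le _ _ _ _ (left_vec k) (bvec n w k)).
  - apply left_weight_nonneg.
  - apply left_vec_norm; lia.
  - apply bvec_norm.
  - intros; apply lenv_product; auto; lia.
Qed.

Lemma rnorm_product_le k : (k < n)%nat -> rnorm n d D A (S k) <= right_weight (n - S k).
Proof.
  intros Hk. unfold rnorm.
  replace (S k + 1)%nat with (n - (n - S k) + 1)%nat by lia.
  replace (bvec n w (S k)) with (bvec n w (n - (n - S k))) by (f_equal; lia).
  apply (spec_norm_rank1_le _ _ _ _ (right_vec (n - S k)) (bvec n w (n - (n - S k)))).
  - apply right_weight_nonneg.
  - apply right_vec_norm; lia.
  - replace (n - (n - S k))%nat with (S k) by lia. apply bvec_norm.
  - intros r c Hr Hc. apply renv_product; auto; [lia|].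
    replace (n - (n - S k))%nat with (S k) by lia. exact Hc.
Qed.

(* Each summand of the coefficient is at most 1, since the three weights multiply to [||T||_F]. *)
Lemma first_order_coeff_product_le :
  0 < fro_full n d D A -> first_order_coeff n d D A <= INR n.
Proof.
  intros HF. unfold first_order_coeff. rewrite <- (Rmult_1_r (INR n)), <- rsum_const.
  apply rsum_le; intros k Hk. cbv zeta.
  assert (HP : left_weight k * f (S k) * right_weight (n - S k) = fro_full n d D A).
  { rewrite fro_full_product, <- (left_weight_right_weight (n - S k)) by lia.
    replace (n - (n - S k))%nat with (S k) by lia. simpl. ring. }
  apply Rmult_le_reg_r with (fro_full n d D A); [exact HF|].
  unfold Rdiv. rewrite Rmult_assoc, Rinv_l, Rmult_1_r, Rmult_1_l by lra. rewrite <- HP.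
  assert (Hl : 0 <= lnorm n d D A (S k)) by apply spec_norm_nonneg.
  assert (Hf : 0 <= f (S k)) by apply sqrt_pos.
  apply Rmult_le_compat; [apply Rmult_le_pos; assumption | apply spec_norm_nonneg | |
                          apply rnorm_product_le; exact Hk].
  apply Rmult_le_compat_r; [exact Hf | apply lnorm_product_le; exact Hk].
Qed.

End ProductState.

Definition tscale (c : R) (A : site_tensors) : site_tensors := fun j a p b => c * A j a p b.

Lemma lenv_tscale n D A c k ps b : lenv n D (tscale c A) k ps b = c ^ k * lenv n D A k ps b.
Proof.
  revert b; induction k; intros b; simpl; [ring|].
  rewrite <- rsum_scal. apply rsum_ext; intros. rewrite IHk. unfold tscale. ring.
Qed.

Lemma tscale_is_eps_perturbation n d D A eps :
  0 <= eps -> is_eps_perturbation n d D A (tscale eps A) eps.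
Proof.
  intros He j _. right. unfold fro_site, tscale.
  set (ss := rsum (bdim n D (j - 1)) (fun a => rsum (d j) (fun p =>
               rsum (bdim n D j) (fun b => (A j a p b) ^ 2)))).
  transitivity (sqrt (eps ^ 2 * ss)).
  - f_equal. unfold ss. rewrite <- rsum_scal. apply rsum_ext; intros.
    rewrite <- rsum_scal. apply rsum_ext; intros.
    rewrite <- rsum_scal. apply rsum_ext; intros. ring.
  - rewrite sqrt_mult, sqrt_pow2 by (auto; apply pow2_ge_0 ||
      (unfold ss; repeat (apply rsum_nonneg; intros); apply pow2_ge_0)).
    reflexivity.
Qed.

Lemma rel_err_tscale n d D A eps : 0 < fro_full n d D A -> 0 <= eps ->
  rel_err n d D A (tscale eps A) = (1 + eps) ^ n - 1.
Proof.
  intros HF He. unfold rel_err.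
  rewrite (msum_ext _ _ (fun ps => ((1 + eps) ^ n - 1) ^ 2 * (contr n D A ps) ^ 2)).
  - assert (Hpow : 1 <= (1 + eps) ^ n) by (apply pow_R1_Rle; lra).
    assert (Hsum : 0 <= msum (pdims d 1 n) (fun ps => (contr n D A ps) ^ 2))
      by (apply msum_nonneg; intros; apply pow2_ge_0).
    rewrite msum_scal, sqrt_mult, sqrt_pow2 by (apply pow2_ge_0 || lra).
    fold (fro_full n d D A). field. lra.
  - intros ps _. unfold contr.
    rewrite (lenv_ext n D (tadd A (tscale eps A)) (tscale (1 + eps) A))
      by (intros; unfold tadd, tscale; ring).
    rewrite lenv_tscale. ring.
Qed.

(* The perturbation [eps * T] already realises the first-order bound: it scales [T] by
   [(1 + eps)^n >= 1 + n eps], while the coefficient is at most [n]. *)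
Lemma rel_err_first_order_attained n d D A :
  (exists ps, Forall2 lt ps (pdims d 1 n) /\ contr n D A ps <> 0) -> product_state n d D A ->
  exists C eps0, 0 < eps0 /\
    forall eps, 0 < eps < eps0 ->
      exists delta, is_eps_perturbation n d D A delta eps /\
        eps * first_order_coeff n d D A - C * eps ^ 2 <= rel_err n d D A delta.
Proof.
  intros Hne [u [w [Hu [Hw HA]]]].
  pose proof (fro_full_pos n d D A Hne) as HF.
  pose proof (first_order_coeff_product_le n d D A u w Hu Hw HA HF) as Hc.
  exists 0, 1. split; [lra|]. intros eps He.
  exists (tscale eps A). split; [apply tscale_is_eps_perturbation; lra|].
  rewrite rel_err_tscale by lra. pose proof (poly n eps (proj1 He)).
  assert (eps * first_order_coeff n d D A <= eps * INR n) by (apply Rmult_le_compat_l; lra).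
  lra.
Qed.

Theorem mainTheorem11 (n : nat) (d D : nat -> nat) (A : site_tensors) :
  (1 <= n)%nat ->
  (exists ps, Forall2 lt ps (pdims d 1 n) /\ contr n D A ps <> 0) ->
  (exists C eps0, 0 < eps0 /\
     forall eps delta, 0 < eps < eps0 ->
       is_eps_perturbation n d D A delta eps ->
       rel_err n d D A delta <= eps * first_order_coeff n d D A + C * eps ^ 2) /\
  (product_state n d D A ->
   exists C eps0, 0 < eps0 /\
     forall eps, 0 < eps < eps0 ->
       exists delta, is_eps_perturbation n d D A delta eps /\
         eps * first_order_coeff n d D A - C * eps ^ 2 <= rel_err n d D A delta).
Proof.
  intros _ Hne. split.
  - apply rel_err_first_order_le; exact Hne.
  - intros Hps. apply rel_err_first_order_attained; assumption.
Qed.
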